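(* Let $G$ be a bipartite graph with colour classes $V$ and $W$, where $\#V=v$ and $\#W=w$, and suppose $G$ contains no cycle of length $4$ and no cycle of length $6$. (i) If $w>\lfloor v^2/4\rfloor$, then at least $\lceil w-v^2/4\rceil$ vertices of $W$ have degree $0$ or $1$. (ii) If every vertex of $G$ has degree at least $2$, then $w\le\lfloor v^2/4\rfloor$ and $v\le\lfloor w^2/4\rfloor$. *)

From mathcomp Require Import all_boot all_order all_algebra.
Set Implicit Arguments. Unset Strict Implicit. Unset Printing Implicit Defensive.

(* A bipartite graph with colour classes V and W (finite types) is given by its
   edge relation e : V -> W -> bool (e x y = true iff x ~ y). *)

Definition degV (V W : finType) (e : V -> W -> bool) (x : V) : nat :=
  #|[set y : W | e x y]|.

Definition degW (V W : finType) (e : V -> W -> bool) (y : W) : nat :=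
  #|[set x : V | e x y]|.

Definition no_C4 (V W : finType) (e : V -> W -> bool) : Prop :=
  ~ exists (x1 x2 : V) (y1 y2 : W),
      [/\ x1 != x2, y1 != y2 &
          [&& e x1 y1, e x2 y1, e x2 y2 & e x1 y2]].

Definition no_C6 (V W : finType) (e : V -> W -> bool) : Prop :=
  ~ exists (x1 x2 x3 : V) (y1 y2 y3 : W),
      [/\ [&& x1 != x2, x2 != x3 & x1 != x3],
          [&& y1 != y2, y2 != y3 & y1 != y3] &
          [&& e x1 y1, e x2 y1, e x2 y2, e x3 y2, e x3 y3 & e x1 y3]].

From mathcomp Require Import all_boot all_order all_algebra.
Import Order.TTheory GRing.Theory Num.Theory.

(* Choose two neighbours a y, b y of every y in W of degree at least 2. As G
   has no C4, distinct such y give distinct pairs {a y, b y}; as G has no C6,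
   these pairs, read as edges of a graph on V, form no triangle. By Mantel's
   theorem there are at most v^2/4 of them: if x0 has maximum degree D, its
   neighbourhood is independent, so every edge meets one of the v - D other
   vertices, and (v - D) D <= v^2/4. This gives (i), and (ii) follows by
   applying the same bound to G and to G with its colour classes swapped. *)

Set Implicit Arguments.
Unset Strict Implicit.
Unset Printing Implicit Defensive.

Section MantelFamily.

Variables (I V : finType) (A : {set I}) (a b : I -> V).

Local Notation ends i := [set a i; b i].
Let deg x := #|[set i in A | x \in ends i]|.
Let other x i := if a i == x then b i else a i.

Hypothesis ends_neq : {in A, forall i, a i != b i}.
Hypothesis ends_inj : {in A &, injective (fun i => ends i)}.
Hypothesis ends_triangle_free : forall x y z i j k,
  i \in A -> j \in A -> k \in A -> [&& x != y, y != z & z != x] ->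
  [&& x \in ends i, y \in ends i, y \in ends j, z \in ends j,
      z \in ends k & x \in ends k] -> False.

Let other_mem x i : other x i \in ends i.
Proof. by rewrite /other !inE; case: (a i == x); rewrite eqxx ?orbT. Qed.

Let endsE [x i] : x \in ends i -> ends i = [set x; other x i].
Proof.
rewrite /other !inE => /orP[]/eqP <-; first by rewrite eqxx.
by case: eqP => [-> | _]; rewrite // setUC.
Qed.

Let other_neq [x i] : i \in A -> x \in ends i -> other x i != x.
Proof.
move=> iA; have neq := ends_neq iA; rewrite /other !inE.
by case/orP=> /eqP ->; rewrite ?eqxx ?(negbTE neq) // eq_sym.
Qed.

Let deg_sum x : deg x = \sum_(i in A) (x \in ends i).
Proof.
rewrite /deg -sum1dep_card big_mkcondr /=.
by apply: eq_bigr => i _; case: (x \in ends i).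
Qed.

Lemma mantel_family : (4 * #|A| <= #|V| ^ 2)%N.
Proof.
have [-> | [i0 _]] := set_0Vmem A; first by rewrite cards0.
have [x0 _ deg_max] := @arg_maxnP V (a i0) xpredT deg isT.
pose star := [set i in A | x0 \in ends i].
pose N := other x0 @: star.
have card_N : #|N| = deg x0.
  rewrite card_in_imset // => i j /setIdP[iA x0i] /setIdP[jA x0j] eq_other.
  by apply: ends_inj; rewrite // (endsE x0i) (endsE x0j) eq_other.
(* N is the neighbourhood of x0, and an edge inside it would close a triangle
   through x0. *)
have ends_notin_N i : i \in A -> exists2 x, x \notin N & x \in ends i.
  move=> iA.
  have [aN | a_notin_N] := boolP (a i \in N); last by exists (a i); rewrite ?set21.
  have [bN | b_notin_N] := boolP (b i \in N); last by exists (b i); rewrite ?set22.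
  case/imsetP: aN => j /setIdP[jA x0j] aj; case/imsetP: bN => k /setIdP[kA x0k] bk.
  exfalso; apply: (@ends_triangle_free x0 (a i) (b i) _ _ _ jA iA kA).
    by rewrite ends_neq // aj eq_sym other_neq //= bk other_neq.
  by rewrite x0j x0k aj other_mem -aj bk other_mem -bk !inE !eqxx ?orbT.
have card_A : (#|A| <= #|~: N| * deg x0)%N.
  apply: (@leq_trans (\sum_(x in ~: N) deg x)); last first.
    by rewrite -sum_nat_const; apply: leq_sum => x _; apply: deg_max.
  under eq_bigr do rewrite deg_sum; rewrite exchange_big -sum1_card.
  apply: leq_sum => i iA; have [x xN xi] := ends_notin_N i iA.
  by rewrite (bigD1 x) ?in_setC // xi.
rewrite -(cardsC N) card_N addnC; apply: leq_trans (nat_AGM2 _ _).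
by rewrite leq_mul2l card_A orbT.
Qed.

End MantelFamily.

Lemma set2_mem3 (T : finType) (p q x y z : T) :
  x \in [set p; q] -> y \in [set p; q] -> z \in [set p; q] ->
  [|| x == y, y == z | z == x].
Proof. by do 3!case/set2P=> ->; rewrite eqxx ?orbT. Qed.

Section NoC4C6.

Variables (V W : finType) (e : V -> W -> bool).
Hypotheses (C4 : no_C4 e) (C6 : no_C6 e).

Lemma no_C4_common_neighbour x1 x2 y1 y2 :
  x1 != x2 -> e x1 y1 -> e x2 y1 -> e x1 y2 -> e x2 y2 -> y1 = y2.
Proof.
move=> x12 e11 e21 e12 e22; apply/eqP/negP => /negP y12.
by apply: C4; exists x1, x2, y1, y2; rewrite e11 e21 e22 e12.
Qed.

Lemma card_degW_ge2 : (4 * #|[set y | (2 <= degW e y)%N]| <= #|V| ^ 2)%N.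
Proof.
set A := [set y | _].
have [-> | [y0]] := set_0Vmem A; first by rewrite cards0.
rewrite inE => /ltnW; rewrite card_gt0 => /set0Pn[x0 _].
pose nb y := enum [set x | e x y].
pose a y := nth x0 (nb y) 0; pose b y := nth x0 (nb y) 1.
have size_nb y : size (nb y) = degW e y by rewrite -cardE.
have nb_adj y k : (k < degW e y)%N -> e (nth x0 (nb y) k) y.
  by rewrite -size_nb => /(mem_nth x0); rewrite mem_enum inE.
have ends_adj y x : y \in A -> x \in [set a y; b y] -> e x y.
  rewrite inE => y2 /set2P[] ->; apply: nb_adj; exact: leq_trans y2.
have ends_neq : {in A, forall y, a y != b y}.
  move=> y; rewrite inE => y2.
  by rewrite nth_uniq ?enum_uniq ?size_nb // (leq_trans _ y2).
apply: (@mantel_family _ _ A a b) => //.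
- move=> y1 y2 y1A y2A ends12.
  apply: (@no_C4_common_neighbour (a y1) (b y1)); rewrite ?ends_neq //;
    apply: ends_adj; rewrite -?ends12 ?set21 ?set22 //.
- move=> x y z i j k iA jA kA xyz ends_ijk; apply: C6.
  case/andP: ends_ijk => xi /and5P[yi yj zj zk xk].
  have [/negbTE xy /negbTE yz /negbTE zx] := and3P xyz.
  exists x, y, z, i, j, k; split; first by rewrite xy yz eq_sym zx.
    apply/and3P; split; apply/eqP => ?; subst.
    - by have := set2_mem3 xi yi zj; rewrite xy yz zx.
    - by have := set2_mem3 yj zj xk; rewrite xy yz zx.
    - by have := set2_mem3 xi yi zk; rewrite xy yz zx.
  by rewrite !ends_adj.
Qed.

Lemma card_W_le_of_degW_ge2 :
  (forall y, 2 <= degW e y)%N -> (4 * #|W| <= #|V| ^ 2)%N.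
Proof.
move=> deg2; rewrite -cardsT.
have <- : [set y | (2 <= degW e y)%N] = setT by apply/setP => y; rewrite !inE deg2.
exact: card_degW_ge2.
Qed.

End NoC4C6.

Lemma no_C4_transpose (V W : finType) (e : V -> W -> bool) :
  no_C4 e -> no_C4 (fun y x => e x y).
Proof.
move=> C4 [y1 [y2 [x1 [x2 [y12 x12 /and4P[e11 e12 e22 e21]]]]]].
by apply: C4; exists x1, x2, y1, y2; rewrite e11 e21 e22 e12.
Qed.

Lemma no_C6_transpose (V W : finType) (e : V -> W -> bool) :
  no_C6 e -> no_C6 (fun y x => e x y).
Proof.
move=> C6 [y1 [y2 [y3 [x1 [x2 [x3 [/and3P[y12 y23 y13] /and3P[x12 x23 x13]]]]]]]].
case/andP=> e11 /and5P[e12 e22 e23 e33 e31].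
apply: C6; exists x1, x3, x2, y1, y3, y2; split.
- by rewrite x13 x12 eq_sym x23.
- by rewrite y13 y12 eq_sym y23.
- by rewrite e11 e31 e33 e23 e22 e12.
Qed.

Lemma ceil_sub_quarter_le (R : archiRealFieldType) (m k n : nat) :
  (4 * m <= n)%N -> (Num.ceil ((m + k)%:R - n%:R / 4%:R : R) <= k%:Z)%R.
Proof.
move=> le_4m_n; rewrite ceil_le_int natrD addrAC gerDr subr_le0.
by rewrite ler_pdivlMr ?ltr0n // -natrM ler_nat mulnC.
Qed.

Theorem proposition2p2 (V W : finType) (e : V -> W -> bool) :
  no_C4 e -> no_C6 e ->
  ((#|V| ^ 2 %/ 4 < #|W|)%N ->
     (Num.ceil ((#|W|%:R - (#|V| ^ 2)%:R / 4%:R) : rat)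
        <= (#|[set y : W | (degW e y <= 1)%N]| : int))%R)
  /\
  ((forall x : V, (2 <= degV e x)%N) -> (forall y : W, (2 <= degW e y)%N) ->
     (#|W| <= #|V| ^ 2 %/ 4)%N /\ (#|V| <= #|W| ^ 2 %/ 4)%N).
Proof.
(* The bound in (i) holds without its hypothesis. *)
move=> C4 C6; split=> [_ | degV2 degW2].
  set A := [set y | (2 <= degW e y)%N].
  have -> : [set y | (degW e y <= 1)%N] = ~: A by apply/setP => y; rewrite !inE leqNgt.
  by rewrite -(cardsC A) ceil_sub_quarter_le ?card_degW_ge2.
rewrite !leq_divRL // ![(_ * 4)%N]mulnC; split.
  exact: card_W_le_of_degW_ge2 C4 C6 degW2.
exact: card_W_le_of_degW_ge2 (no_C4_transpose C4) (no_C6_transpose C6) degV2.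
Qed.
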